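(* There exist a simple polygon $P$ with edge set $E$, an additive-weight function $\delta\colon E\to\mathbb{R}^+_0$, and an edge $e\in E$ such that the face $f(e)$ of the additively-weighted straight skeleton is not monotone with respect to $e$ (i.e., with respect to the supporting line of $e$).
   Context: Additively-weighted wavefront: For each edge $e$ of $P$ let $\overline{e}$ be its supporting line and $n_e$ its inward unit normal. The wavefront $\mathcal{W}_{P,\delta}(t)$ is a time-dependent set of polygons with $\mathcal{W}_{P,\delta}(0)=P$. The set $e(t)$ of wavefront fragments of input edge $e$ at time $t$ lies on the line $\overline{e}+\max(0,t-\delta(e))\cdot n_e$ (stationary until time $\delta(e)$, then moving inwards self-parallel at unit speed); incidences are preserved, and wavefront vertices are intersections of supporting lines of incident wavefront edges. Events: edge events (a segment shrinks to zero length and is removed), split events (a reflex vertex reaches another part of the wavefront, which is split there), speed-change events (at time $\delta(e)$ fragments of $e$ start to move). The process ends when all wavefront polygons have collapsed. The face of $e$ is $f(e):=\bigcup_{t\ge 0}e(t)$. A set is monotone with respect to a line $\ell$ if every line perpendicular to $\ell$ intersects it in a connected set. *)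

From mathcomp Require Import all_boot all_order all_algebra.
From mathcomp Require Import all_classical all_reals all_analysis.
From mathcomp Require Import Rstruct Rstruct_topology.

Set Implicit Arguments.
Unset Strict Implicit.
Unset Printing Implicit Defensive.
Import Order.TTheory GRing.Theory Num.Theory.
Import numFieldNormedType.Exports.
Local Open Scope ring_scope.
Local Open Scope classical_set_scope.

Section AWSkel.
Variable R : realType.
Notation pt := (R * R)%type.

Definition padd (p q : pt) : pt := (p.1 + q.1, p.2 + q.2).
Definition psub (p q : pt) : pt := (p.1 - q.1, p.2 - q.2).
Definition pscale (s : R) (p : pt) : pt := (s * p.1, s * p.2).
Definition dot (p q : pt) : R := p.1 * q.1 + p.2 * q.2.
Definition cross (p q : pt) : R := p.1 * q.2 - p.2 * q.1.
Definition pnorm (p : pt) : R := Num.sqrt (dot p p).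

Definition seg (a b : pt) : set pt :=
  [set x | exists s : R, 0 <= s <= 1 /\ x = padd a (pscale s (psub b a))].

Definition vtx (V : seq pt) (i : nat) : pt := nth (0, 0) V (i %% size V)%N.
Definition edge_seg (V : seq pt) (i : nat) : set pt := seg (vtx V i) (vtx V i.+1).

(* twice the signed (shoelace) area *)
Definition area2 (V : seq pt) : R :=
  \sum_(i < size V) cross (vtx V i) (vtx V i.+1).

Definition simple_polygon (V : seq pt) : Prop :=
  (3 <= size V)%N /\
  (forall i, (i < size V)%N -> vtx V i <> vtx V i.+1) /\
  (forall i j x, (i < size V)%N -> (j < size V)%N -> i <> j ->
     edge_seg V i x -> edge_seg V j x ->
     (j = (i.+1 %% size V)%N /\ x = vtx V j) \/ (i = (j.+1 %% size V)%N /\ x = vtx V i)).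

Definition edir (V : seq pt) (e : nat) : pt := psub (vtx V e.+1) (vtx V e).
Definition orient (V : seq pt) : R := if 0 < area2 V then 1 else -1.
(* inward unit normal n_e of input edge e *)
Definition innormal (V : seq pt) (e : nat) : pt :=
  pscale (orient V / pnorm (edir V e)) (- (edir V e).2, (edir V e).1).

(* the line  bar(e) + max(0, t - delta e) n_e  is  { x | n_e . x = off e t } *)
Definition off (V : seq pt) (delta : nat -> R) (e : nat) (t : R) : R :=
  dot (innormal V e) (vtx V e) + Num.max 0 (t - delta e).
Definition wline V delta e t : set pt :=
  [set x | dot (innormal V e) x = off V delta e t].

(* intersection point of the moving lines of a and b at time t (Cramer) *)
Definition isect V delta (a b : nat) (t : R) : pt :=
  let na := innormal V a in let nb := innormal V b in
  let ca := off V delta a t in let cb := off V delta b t in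
  let d := cross na nb in
  ((ca * nb.2 - cb * na.2) / d, (na.1 * cb - nb.1 * ca) / d).

(* A wavefront polygon is represented combinatorially by the cyclic sequence
   c of the labels (input edges) of its edges. Its vertex j (between the edges
   labelled c_j and c_{j+1}) is the intersection of their supporting lines. *)
Definition lab (c : seq nat) (j : nat) : nat := nth 0%N c (j %% size c)%N.
Definition wv V delta (c : seq nat) (t : R) (j : nat) : pt :=
  isect V delta (lab c j) (lab c j.+1) t.
Definition wpoly V delta (c : seq nat) (t : R) : seq pt :=
  [seq wv V delta c t j | j <- iota 0 (size c)].

(* fragments of input edge e in a configuration C (list of wavefront polygons):
   the edge of label c_{j+1} joins vertices j and j+1 *)
Definition frag V delta (C : seq (seq nat)) (e : nat) (t : R) : set pt :=
  [set x | exists c j, c \in C /\ (j < size c)%N /\ lab c j.+1 = e /\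
             seg (wv V delta c t j) (wv V delta c t j.+1) x].

Definition total_area2 V delta (C : seq (seq nat)) (t : R) : R :=
  \sum_(c <- C) area2 (wpoly V delta c t).

(* a wavefront polygon in general position at time t (no event at time t):
   consecutive supporting lines intersect in a point, the polygon is simple,
   has the orientation of P, and every wavefront edge has positive length and
   the direction of its input edge (incidences and orientations preserved) *)
Definition valid_cycle V delta (c : seq nat) (t : R) : Prop :=
  (3 <= size c)%N /\
  (forall j, (j < size c)%N ->
      cross (innormal V (lab c j)) (innormal V (lab c j.+1)) != 0) /\
  simple_polygon (wpoly V delta c t) /\
  (0 < area2 (wpoly V delta c t) <-> 0 < area2 V) /\
  (forall j, (j < size c)%N -> exists lam : R, 0 < lam /\
      psub (wv V delta c t j.+1) (wv V delta c t j) = pscale lam (edir V (lab c j.+1))).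

Definition valid_config V delta (C : seq (seq nat)) (t : R) : Prop :=
  (forall c, c \in C -> valid_cycle V delta c t) /\
  (forall i k x, (i < size C)%N -> (k < size C)%N -> i <> k ->
     (exists j, (j < size (nth [::] C i))%N /\
        seg (wv V delta (nth [::] C i) t j) (wv V delta (nth [::] C i) t j.+1) x) ->
     ~ (exists j, (j < size (nth [::] C k))%N /\
        seg (wv V delta (nth [::] C k) t j) (wv V delta (nth [::] C k) t j.+1) x)).

(* event at time t, from configuration C to configuration C':
   edge events delete labels, split events cut a cycle into arcs (so every
   new cycle is a cyclic subsequence of an old cycle); the new wavefront is
   contained in the old one (per input edge) and no area is lost, i.e. only
   zero-length edges and collapsed polygons disappear. *)
Definition event V delta (C C' : seq (seq nat)) (t : R) : Prop :=
  (forall c', c' \in C' -> exists c r, c \in C /\ subseq c' (rot r c)) /\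
  (forall e, frag V delta C' e t `<=` frag V delta C e t) /\
  total_area2 V delta C' t = total_area2 V delta C t.

(* a wavefront propagation: event times 0 = t_0 < t_1 < ... < t_K and
   configurations C_0 .. C_{K-1}, C_k being the wavefront on [t_k, t_{k+1}] *)
Definition propagation V (delta : nat -> R) (ts : seq R) (Cs : seq (seq (seq nat))) : Prop :=
  size ts = (size Cs).+1 /\ (0 < size Cs)%N /\
  nth 0 ts 0 = 0 /\
  (forall k, (k < size Cs)%N -> nth 0 ts k < nth 0 ts k.+1) /\
  nth [::] Cs 0 = [:: iota 0 (size V)] /\
  (forall k t, (k < size Cs)%N -> nth 0 ts k < t < nth 0 ts k.+1 ->
     valid_config V delta (nth [::] Cs k) t) /\
  (forall k, (k.+1 < size Cs)%N ->
     event V delta (nth [::] Cs k) (nth [::] Cs k.+1) (nth 0 ts k.+1)) /\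
  (forall c, c \in nth [::] Cs (size Cs).-1 ->
     area2 (wpoly V delta c (nth 0 ts (size Cs))) = 0).

(* face f(e) = union over t >= 0 of e(t) *)
Definition face V delta ts Cs (e : nat) : set pt :=
  [set x | exists k t, (k < size Cs)%N /\ nth 0 ts k <= t <= nth 0 ts k.+1 /\
             frag V delta (nth [::] Cs k) e t x].

Definition monotone_wrt (S : set pt) (d : pt) : Prop :=
  forall c : R, connected (S `&` [set x | dot d x = c]).

End AWSkel.

From mathcomp Require Import all_boot all_order all_algebra.
From mathcomp Require Import all_classical all_reals all_analysis.
From mathcomp Require Import Rstruct Rstruct_topology.
From mathcomp Require Import lra ring zify.
Import Order.TTheory GRing.Theory Num.Theory.
Import numFieldNormedType.Exports.
Local Open Scope ring_scope.

Set Implicit Arguments.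
Unset Strict Implicit.
Unset Printing Implicit Defensive.

(* The counterexample is the quadrilateral with vertices (-4,-3), (0,0), (8,0),
   (-4,16), where only edge 0, from (-4,-3) to (0,0), has weight 1.  Until time 1
   that edge is stationary, so the wavefront vertex between edges 0 and 1 climbs
   along it to (4/3, 1); afterwards edge 0 moves as well and the vertex travels
   back to the left, reaching (2/3, 3) at time 3.  Hence the face of the bottom
   edge 1 meets the vertical line x = 1 in (1,0) and (1,3) but not in (1,1).
   A propagation is only specified by its invariants, so it remains to see that
   every propagation is the moving quadrilateral until the first event at time
   19/5: dropping a label earlier would put a wavefront vertex on two opposite,
   disjoint edges, and splitting would make two wavefront polygons share a
   vertex. *)

Section PlaneGeometry.
Variable R : realType.
Implicit Types (a b c d p q w x u v : R * R) (k : R).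

Lemma pnorm_eq p k : 0 <= k -> dot p p = k ^+ 2 -> pnorm p = k.
Proof. by move=> k_ge0 hp; rewrite /pnorm hp sqrtr_sqr ger0_norm. Qed.

Lemma seg_start a b : seg a b a.
Proof. by exists 0; split; [rewrite lexx ler01 | rewrite /padd /pscale !mul0r !addr0; case: a]. Qed.

Lemma seg_end a b : seg a b b.
Proof.
exists 1; split; first by rewrite lexx ler01.
by case: a b => [? ?] [? ?]; rewrite /padd /pscale /psub /= !mul1r; congr pair; ring.
Qed.

Lemma dot_seg w a b x : seg a b x ->
  exists s, 0 <= s <= 1 /\ dot w x = dot w a + s * (dot w b - dot w a).
Proof.
case=> s [hs ->]; exists s; split => //.
by case: w a b => [? ?] [? ?] [? ?]; rewrite /dot /padd /pscale /psub /=; ring.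
Qed.

Lemma seg_dot_gt w k a b x : k < dot w a -> k < dot w b -> seg a b x -> k < dot w x.
Proof.
move=> ha hb /(dot_seg w) [s [/andP[s0 s1] ->]].
have : 0 <= s * (dot w b - k) by apply: mulr_ge0; lra.
have : 0 <= (1 - s) * (dot w a - k) by apply: mulr_ge0; lra.
nra.
Qed.

Lemma seg_dot_le w k a b x : dot w a <= k -> dot w b <= k -> seg a b x -> dot w x <= k.
Proof.
move=> ha hb /(dot_seg w) [s [/andP[s0 s1] ->]].
have : 0 <= s * (k - dot w b) by apply: mulr_ge0; lra.
have : 0 <= (1 - s) * (k - dot w a) by apply: mulr_ge0; lra.
nra.
Qed.

Lemma seg_separated w k a b c d x :
  k < dot w a -> k < dot w b -> dot w c <= k -> dot w d <= k ->
  seg a b x -> seg c d x -> False.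
Proof.
move=> ha hb hc hd /(seg_dot_gt ha hb) hx /(seg_dot_le hc hd).
by rewrite leNgt hx.
Qed.

Lemma seg_common_end a b c x :
  cross (psub b a) (psub c b) != 0 -> seg a b x -> seg b c x -> x = b.
Proof.
case: a b c x => [a1 a2] [b1 b2] [c1 c2] [x1 x2].
rewrite /cross /psub /seg /padd /pscale /= => hc [s [_ [-> ->]]] [u [_ [e1 e2]]].
suff u0 : u = 0 by rewrite e1 e2 u0 !mul0r !addr0.
apply: (mulIf hc); rewrite mul0r.
have E1 : u * (c1 - b1) = (s - 1) * (b1 - a1) by lra.
have E2 : u * (c2 - b2) = (s - 1) * (b2 - a2) by lra.
transitivity ((b1 - a1) * (u * (c2 - b2)) - (b2 - a2) * (u * (c1 - b1))); first ring.
by rewrite E1 E2; ring.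
Qed.

Lemma crossZ l1 l2 u v : cross (pscale l1 u) (pscale l2 v) = l1 * l2 * cross u v.
Proof. by case: u v => [? ?] [? ?]; rewrite /cross /pscale /=; ring. Qed.

Lemma cross_psub_neq p q r : cross (psub q p) (psub r q) != 0 -> p <> q /\ q <> r.
Proof.
rewrite /cross /psub => hc; split=> eq_pts; move: hc; rewrite eq_pts !subrr /=.
- by rewrite !mul0r subrr eqxx.
- by rewrite !mulr0 subrr eqxx.
Qed.

Lemma cross_psub_dir p q r u v l1 l2 :
  psub q p = pscale l1 u -> psub r q = pscale l2 v -> 0 < l1 -> 0 < l2 ->
  cross u v != 0 -> cross (psub q p) (psub r q) != 0.
Proof. by move=> -> -> l1_gt0 l2_gt0 huv; rewrite crossZ !mulf_neq0 // lt0r_neq0. Qed.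

Lemma simple_triangle p0 p1 p2 :
  cross (psub p1 p0) (psub p2 p1) != 0 -> cross (psub p2 p1) (psub p0 p2) != 0 ->
  cross (psub p0 p2) (psub p1 p0) != 0 ->
  simple_polygon [:: p0; p1; p2].
Proof.
move=> c1 c2 c0; split=> //; split.
  have [? ?] := cross_psub_neq c1; have [_ ?] := cross_psub_neq c2.
  by case=> [|[|[|i]]] //= _; rewrite /vtx /=.
move=> i j x; rewrite /edge_seg /vtx /=.
case: i => [|[|[|i]]] //; case: j => [|[|[|j]]] // _ _ _ /= h1 h2;
  first [left; split=> //; exact: seg_common_end h1 h2
        | right; split=> //; exact: seg_common_end h2 h1].
Qed.

Lemma simple_quadrilateral p0 p1 p2 p3 :
  cross (psub p1 p0) (psub p2 p1) != 0 -> cross (psub p2 p1) (psub p3 p2) != 0 ->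
  cross (psub p3 p2) (psub p0 p3) != 0 -> cross (psub p0 p3) (psub p1 p0) != 0 ->
  (forall x, seg p0 p1 x -> seg p2 p3 x -> False) ->
  (forall x, seg p1 p2 x -> seg p3 p0 x -> False) ->
  simple_polygon [:: p0; p1; p2; p3].
Proof.
move=> c1 c2 c3 c0 s02 s13; split=> //; split.
  have [? ?] := cross_psub_neq c1; have [? ?] := cross_psub_neq c3.
  by case=> [|[|[|[|i]]]] //= _; rewrite /vtx /=.
move=> i j x; rewrite /edge_seg /vtx /=.
case: i => [|[|[|[|i]]]] //; case: j => [|[|[|[|j]]]] // _ _ _ /= h1 h2;
  first [by case: (s02 _ h1 h2) | by case: (s02 _ h2 h1)
        | by case: (s13 _ h1 h2) | by case: (s13 _ h2 h1)
        | left; split=> //; exact: seg_common_end h1 h2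
        | right; split=> //; exact: seg_common_end h2 h1].
Qed.

End PlaneGeometry.

Section CyclicIndices.
Local Open Scope nat_scope.

Lemma modn_succ m d : (m %% d).+1 = m.+1 %[mod d].
Proof. by have := modnDml m 1 d; rewrite !addn1. Qed.

Lemma nth_rot_mod (T : Type) (x0 : T) s r j : r <= size s ->
  nth x0 (rot r s) (j %% size s) = nth x0 s ((r + j) %% size s).
Proof.
have [/size0nil -> _|s_gt0 hr] := posnP (size s); first by rewrite rot_oversize // !nth_nil.
have hi : j %% size s < size s by rewrite ltn_mod.
rewrite -modnDmr /rot nth_cat size_drop; move: (j %% size s) hi => i hi.
case: ltnP => hi_r; first by rewrite nth_drop modn_small //; lia.
rewrite nth_take; last by lia.
have -> : r + i = i - (size s - r) + size s by lia.
by rewrite modnDr modn_small //; lia.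
Qed.

Lemma big_ord_shift_periodic (M : nmodType) n (F : nat -> M) r :
  (forall i, F (i + n) = F i) -> (\sum_(i < n) F (r + i)%N = \sum_(i < n) F i)%R.
Proof.
move=> F_per; elim: r => [|r IH]; first by apply: eq_bigr => i _; rewrite add0n.
case: n F_per IH => [|n] F_per IH; first by rewrite !big_ord0.
rewrite -IH big_ord_recr big_ord_recl /= addrC; congr (_ + _)%R.
  by rewrite addn0 addSn -addnS F_per.
by apply: eq_bigr => i _; rewrite /bump add1n addnS addSn.
Qed.

End CyclicIndices.

Section Wavefront.
Variable R : realType.
Variables (V : seq (R * R)) (delta : nat -> R).
Implicit Types (c : seq nat) (C : seq (seq nat)) (W : seq (R * R)) (t : R).

Lemma lab_eq_mod c i j : i = j %[mod size c] -> lab c i = lab c j.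
Proof. by rewrite /lab => ->. Qed.

Lemma lab_rot c r j : (r <= size c)%N -> lab (rot r c) j = lab c (r + j).
Proof. by move=> hr; rewrite /lab size_rot nth_rot_mod. Qed.

Lemma vtx_rot W r i : (r <= size W)%N -> vtx (rot r W) i = vtx W (r + i).
Proof. by move=> hr; rewrite /vtx size_rot nth_rot_mod. Qed.

Lemma area2_rot W r : area2 (rot r W) = area2 W.
Proof.
have [hr | /ltnW hr] := leqP r (size W); last by rewrite rot_oversize.
rewrite /area2 size_rot; under eq_bigr => i _ do rewrite !vtx_rot // addnS.
rewrite (big_ord_shift_periodic (F := fun i => cross (vtx W i) (vtx W i.+1))) // => i.
by rewrite /vtx -addSn !modnDr.
Qed.

Lemma wv_eq_mod c t i j : i = j %[mod size c] -> wv V delta c t i = wv V delta c t j.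
Proof.
move=> eq_ij; rewrite /wv (lab_eq_mod eq_ij); congr isect; apply: lab_eq_mod.
by rewrite -modn_succ eq_ij modn_succ.
Qed.

Lemma wv_rot c r t j : (r <= size c)%N -> wv V delta (rot r c) t j = wv V delta c t (r + j).
Proof. by move=> hr; rewrite /wv !lab_rot // addnS. Qed.

Lemma size_wpoly c t : size (wpoly V delta c t) = size c.
Proof. by rewrite size_map size_iota. Qed.

Lemma nth_wpoly c t x0 i : (i < size c)%N -> nth x0 (wpoly V delta c t) i = wv V delta c t i.
Proof. by move=> hi; rewrite (nth_map 0%N) ?size_iota // nth_iota. Qed.

Lemma vtx_wpoly c t i : (0 < size c)%N -> vtx (wpoly V delta c t) i = wv V delta c t i.
Proof.
by move=> c_gt0; rewrite /vtx size_wpoly nth_wpoly ?ltn_mod // (wv_eq_mod _ (modn_mod _ _)).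
Qed.

Lemma wpoly_rot c r t : (r <= size c)%N ->
  wpoly V delta (rot r c) t = rot r (wpoly V delta c t).
Proof.
move=> hr; apply: (@eq_from_nth _ (0, 0)); first by rewrite size_rot !size_wpoly size_rot.
rewrite size_wpoly size_rot => i hi.
have := @nth_rot_mod _ (0, 0) (wpoly V delta c t) r i; rewrite size_wpoly modn_small // => -> //.
rewrite !nth_wpoly ?size_rot ?ltn_mod ?(leq_ltn_trans _ hi) // wv_rot //.
by rewrite (wv_eq_mod _ (modn_mod _ _)).
Qed.

Lemma area2_wpoly_rot c r t : area2 (wpoly V delta (rot r c) t) = area2 (wpoly V delta c t).
Proof.
have [hr | /ltnW hr] := leqP r (size c); last by rewrite rot_oversize.
by rewrite wpoly_rot // area2_rot.
Qed.

Lemma frag1P c e t x : frag V delta [:: c] e t x <->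
  exists j, [/\ (j < size c)%N, lab c j.+1 = e & edge_seg (wpoly V delta c t) j x].
Proof.
split=> [[_ [j [/[1!inE] /eqP -> [hj [he hx]]]]] | [j [hj he hx]]].
  by exists j; rewrite /edge_seg !vtx_wpoly // (leq_ltn_trans _ hj).
exists c, j; split; first exact: mem_head.
by move: hx; rewrite /edge_seg !vtx_wpoly // (leq_ltn_trans _ hj).
Qed.

Lemma exists_wv_rot c r t j : (0 < size c)%N ->
  exists2 i, (i < size c)%N & wv V delta (rot r c) t i = wv V delta c t j.
Proof.
move=> c_gt0; have [hr | /ltnW hr] := leqP r (size c); last first.
  by exists (j %% size c)%N; rewrite ?ltn_mod // rot_oversize // (wv_eq_mod _ (modn_mod _ _)).
exists ((j + (size c - r)) %% size c)%N; first by rewrite ltn_mod.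
rewrite wv_rot //; apply: wv_eq_mod.
by rewrite modnDmr addnCA subnKC // modnDr.
Qed.

Lemma frag_rot_sub c r e t :
  (frag V delta [:: rot r c] e t `<=` frag V delta [:: c] e t)%classic.
Proof.
have [hr | /ltnW hr] := leqP r (size c); last by rewrite rot_oversize.
move=> x [_ [j [/[1!inE] /eqP -> [+ [+ +]]]]]; rewrite size_rot => hj.
rewrite lab_rot // !wv_rot // => <- hx.
exists c, ((r + j) %% size c)%N; split; first exact: mem_head.
split; first by rewrite ltn_mod (leq_ltn_trans _ hj).
split; first by apply: lab_eq_mod; rewrite modn_succ addnS.
by rewrite (wv_eq_mod _ (modn_mod _ _)) (wv_eq_mod _ (modn_succ _ _)) -addnS.
Qed.

Lemma frag_rot c r e t : frag V delta [:: rot r c] e t = frag V delta [:: c] e t.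
Proof.
apply/seteqP; split; first exact: frag_rot_sub.
by rewrite -{1}(rotK r c); apply: frag_rot_sub.
Qed.

Lemma frag_wv_next C c t j : c \in C -> (0 < size c)%N ->
  frag V delta C (lab c j.+1) t (wv V delta c t j).
Proof.
move=> cC c_gt0; exists c, (j %% size c)%N; split=> //.
split; first by rewrite ltn_mod.
split; first exact: lab_eq_mod (modn_succ _ _).
rewrite (wv_eq_mod _ (modn_mod _ _)) (wv_eq_mod _ (modn_succ _ _)); exact: seg_start.
Qed.

Lemma frag_wv_prev C c t j : c \in C -> (0 < size c)%N ->
  frag V delta C (lab c j) t (wv V delta c t j).
Proof.
move=> cC c_gt0; have eq_j : (j + (size c).-1).+1 = j %[mod size c].
  by rewrite -addnS prednK // modnDr.
exists c, ((j + (size c).-1) %% size c)%N; split=> //.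
split; first by rewrite ltn_mod.
split; first by apply: lab_eq_mod; rewrite modn_succ.
rewrite (wv_eq_mod _ (modn_succ _ _)) (wv_eq_mod _ eq_j); exact: seg_end.
Qed.

Lemma isect_on a b t : cross (innormal V a) (innormal V b) != 0 ->
  wline V delta a t (isect V delta a b t) /\ wline V delta b t (isect V delta a b t).
Proof.
rewrite /wline /isect.
move: (innormal V a) (innormal V b) (off V delta a t) (off V delta b t).
by move=> [a1 a2] [b1 b2] ka kb; rewrite /cross /dot /= => hc; split; field.
Qed.

Lemma isect_eq a b t p : cross (innormal V a) (innormal V b) != 0 ->
  wline V delta a t p -> wline V delta b t p -> isect V delta a b t = p.
Proof.
rewrite /wline /isect.
move: (innormal V a) (innormal V b) (off V delta a t) (off V delta b t) p.
move=> [a1 a2] [b1 b2] ka kb [p1 p2]; rewrite /cross /dot /= => hc <- <-.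
by congr pair; field.
Qed.

Lemma frag_on_wline C t' e t x : valid_config V delta C t' ->
  frag V delta C e t x -> wline V delta e t x.
Proof.
move=> [C_valid _] [c [j [cC [hj [<- hx]]]]].
have [c_ge3 [cross_lab _]] := C_valid c cC.
have c_gt0 : (0 < size c)%N by apply: leq_trans c_ge3.
have [_ on_left] := isect_on t (cross_lab j hj).
have cross_next := cross_lab _ (ltn_pmod j.+1 c_gt0).
rewrite (lab_eq_mod (modn_mod _ _)) (lab_eq_mod (modn_succ _ _)) in cross_next.
have [on_right _] := isect_on t cross_next.
move: hx on_left on_right; rewrite /wline /wv /=.
by move=> /(dot_seg (innormal V (lab c j.+1))) [s [_ ->]] -> ->; ring.
Qed.

Lemma valid_config1 c t : valid_cycle V delta c t -> valid_config V delta [:: c] t.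
Proof. by move=> hc; split=> [c' /[1!inE] /eqP -> // | [|i] [|k]]. Qed.

Lemma propagation_ts_ge0 ts Cs k : propagation V delta ts Cs ->
  (k <= size Cs)%N -> 0 <= nth 0 ts k.
Proof.
move=> [_ [_ [ts0 [ts_lt _]]]]; elim: k => [|k IH] hk; first by rewrite ts0.
exact: le_trans (IH (ltnW hk)) (ltW (ts_lt k hk)).
Qed.

End Wavefront.

Lemma exists_crossing_step d (T : orderType d) (f : nat -> T) (y : T) K :
  (f 0%N <= y)%O -> (y < f K)%O -> exists k, (k < K)%N /\ (f k <= y < f k.+1)%O.
Proof.
elim: K => [|K IH] f0 yK; first by move: (le_lt_trans f0 yK); rewrite ltxx.
have [fK | yfK] := leP (f K) y; first by exists K; rewrite fK yK.
by have [k [kK hk]] := IH f0 yfK; exists k; rewrite ltnS ltnW.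
Qed.

Lemma connected_snd_between (R : realType) (S : set (R * R)) p q y :
  connected S -> S p -> S q -> p.2 <= y <= q.2 -> exists2 z, S z & z.2 = y.
Proof.
move=> S_conn Sp Sq py_q.
have snd_cont : {within S, continuous (@snd R R)}%classic.
  by apply: continuous_subspaceT => x; exact: cvg_snd.
have /connected_intervalP snd_S := connected_continuous_connected S_conn snd_cont.
have [z Sz <-] := snd_S _ _ (ex_intro2 _ _ p Sp erefl) (ex_intro2 _ _ q Sq erefl) y py_q.
by exists z.
Qed.

Local Notation R := Rdefinitions.R.

Definition V0 : seq (R * R) := [:: (-4, -3); (0, 0); (8, 0); (-4, 16)].
Definition delta0 (i : nat) : R := if i == 0%N then 1 else 0.

Definition quad : seq nat := [:: 0; 1; 2; 3]%N.
Definition tri : seq nat := [:: 0; 2; 3]%N.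

(* [lag t] is the distance travelled by edge 0 by time t; [Qi t] is the wavefront
   vertex between edges i and i+1 of the quadrilateral, and [T0 t] the one between
   edges 0 and 2 after edge 1 has collapsed. *)
Definition lag (t : R) : R := Num.max 0 (t - 1).
Definition Q0 t : R * R := ((4 * t - 5 * lag t) / 3, t).
Definition Q1 t : R * R := (8 - 2 * t, t).
Definition Q2 t : R * R := (t - 4, 16 - 3 * t).
Definition Q3 t : R * R := (t - 4, (5 * lag t + 3 * t - 12) / 4).
Definition T0 t : R * R :=
  ((128 - 15 * lag t - 20 * t) / 25, (20 * lag t - 15 * t + 96) / 25).

#[local] Arguments isect : simpl never.
#[local] Arguments innormal : simpl never.
#[local] Arguments off : simpl never.

Ltac neq0 := rewrite neq_lt; apply/orP; first [by left; lra | by right; lra].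

Lemma lag_le1 t : t <= 1 -> lag t = 0.
Proof. by move=> t_le1; apply/max_idPl; lra. Qed.

Lemma lag_ge1 t : 1 <= t -> lag t = t - 1.
Proof. by move=> t_ge1; apply/max_idPr; lra. Qed.

Lemma lag_cases t : (t <= 1 /\ lag t = 0) \/ (1 <= t /\ lag t = t - 1).
Proof.
have [t_le1 | /ltW t_ge1] := lerP t 1; [left | right]; split=> //.
  exact: lag_le1.
exact: lag_ge1.
Qed.

Lemma area2_V0 : area2 V0 = 204.
Proof. by rewrite /area2 /= !big_ord_recr big_ord0 /= /vtx /= /cross /=; lra. Qed.

Lemma orient_V0 : orient V0 = 1.
Proof. by rewrite /orient area2_V0 ifT //; lra. Qed.

Ltac unit_normal len :=
  rewrite /innormal orient_V0 (@pnorm_eq _ _ len);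
  [ rewrite /edir /psub /vtx /pscale /=; congr pair; field
  | lra
  | rewrite /edir /psub /vtx /dot /=; lra ].

Lemma innormal_V0 e : (e < 4)%N ->
  innormal V0 e = nth (0, 0) [:: (-3/5, 4/5); (0, 1); (-4/5, -3/5); (1, 0)] e.
Proof.
case: e => [|[|[|[|e]]]] //= _; [ by unit_normal (5 : R) | by unit_normal (8 : R)
                                | by unit_normal (20 : R) | by unit_normal (19 : R) ].
Qed.

Lemma off_V0 e t : (e < 4)%N -> 0 <= t ->
  off V0 delta0 e t = nth 0 [:: lag t; t; t - 32/5; t - 4] e.
Proof.
move=> e_lt4 t_ge0; have max_t : Num.max 0 (t - 0) = t by rewrite subr0; apply/max_idPr.
rewrite /off innormal_V0 // /delta0 /dot /vtx.
by case: e e_lt4 => [|[|[|[|e]]]] //= _; rewrite ?max_t -?/(lag t); lra.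
Qed.

Ltac vertex_V0 :=
  move=> t_ge0; apply: isect_eq;
  rewrite /wline /= !innormal_V0 // ?off_V0 //= /cross /dot /Q0 /Q1 /Q2 /Q3 /T0 /=;
  [neq0 | lra | lra].

Lemma isect_V0_01 t : 0 <= t -> isect V0 delta0 0 1 t = Q0 t. Proof. vertex_V0. Qed.
Lemma isect_V0_12 t : 0 <= t -> isect V0 delta0 1 2 t = Q1 t. Proof. vertex_V0. Qed.
Lemma isect_V0_23 t : 0 <= t -> isect V0 delta0 2 3 t = Q2 t. Proof. vertex_V0. Qed.
Lemma isect_V0_30 t : 0 <= t -> isect V0 delta0 3 0 t = Q3 t. Proof. vertex_V0. Qed.
Lemma isect_V0_02 t : 0 <= t -> isect V0 delta0 0 2 t = T0 t. Proof. vertex_V0. Qed.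

Lemma wpoly_quad t : 0 <= t -> wpoly V0 delta0 quad t = [:: Q0 t; Q1 t; Q2 t; Q3 t].
Proof.
move=> t_ge0; rewrite /wpoly /wv /lab /=.
by rewrite isect_V0_01 // isect_V0_12 // isect_V0_23 // isect_V0_30.
Qed.

Lemma wpoly_tri t : 0 <= t -> wpoly V0 delta0 tri t = [:: T0 t; Q2 t; Q3 t].
Proof.
by move=> t_ge0; rewrite /wpoly /wv /lab /= isect_V0_02 // isect_V0_23 // isect_V0_30.
Qed.

Lemma edir_V0 e : (e < 4)%N ->
  edir V0 e = nth (0, 0) [:: (4, 3); (8, 0); (-12, 16); (0, -19)] e.
Proof. by case: e => [|[|[|[|e]]]] //= _; rewrite /edir /psub /vtx /=; congr pair; lra. Qed.

Lemma quad_edges t : 0 < t < 19/5 ->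
  [/\ psub (Q1 t) (Q0 t) = pscale ((8 - 2 * t - (4 * t - 5 * lag t) / 3) / 8) (edir V0 1),
      psub (Q2 t) (Q1 t) = pscale ((4 - t) / 4) (edir V0 2),
      psub (Q3 t) (Q2 t) = pscale ((76 - 15 * t - 5 * lag t) / 76) (edir V0 3),
      psub (Q0 t) (Q3 t) = pscale (((4 * t - 5 * lag t) / 3 - t + 4) / 4) (edir V0 0) &
   [/\ 0 < (8 - 2 * t - (4 * t - 5 * lag t) / 3) / 8, 0 < (4 - t) / 4,
       0 < (76 - 15 * t - 5 * lag t) / 76 & 0 < ((4 * t - 5 * lag t) / 3 - t + 4) / 4]].
Proof.
move=> /andP[t_gt0 t_lt]; rewrite !edir_V0 //= /psub /pscale /Q0 /Q1 /Q2 /Q3 /=.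
by have [[? ->] | [? ->]] := lag_cases t; split; try split; try congr pair; lra.
Qed.

Lemma quad_opposite_edges t : 0 < t < 19/5 ->
  (forall x, seg (Q0 t) (Q1 t) x -> seg (Q2 t) (Q3 t) x -> False) /\
  (forall x, seg (Q1 t) (Q2 t) x -> seg (Q3 t) (Q0 t) x -> False).
Proof.
move=> /andP[t_gt0 t_lt]; split=> x h1 h2.
  apply: (seg_separated (w := (1, 0)) (k := t - 4) _ _ _ _ h1 h2);
  by rewrite /dot /Q0 /Q1 /Q2 /Q3 /=; have [[? ?] | [? ?]] := lag_cases t; lra.
apply: (seg_separated (w := (-4, -3)) (k := 5 * t - 32) _ _ _ _ h2 h1);
by rewrite /dot /Q0 /Q1 /Q2 /Q3 /=; have [[? ?] | [? ?]] := lag_cases t; lra.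
Qed.

Lemma quad_area2_gt0 t : 0 < t < 19/5 -> 0 < area2 (wpoly V0 delta0 quad t).
Proof.
move=> /andP[t_gt0 t_lt]; rewrite wpoly_quad; last lra.
rewrite /area2 /= !big_ord_recr big_ord0 /= /vtx /= /cross /Q0 /Q1 /Q2 /Q3 /=.
have [[? ->] | [? ->]] := lag_cases t; first nra.
have := sqr_ge0 (t - 161/40); rewrite expr2; nra.
Qed.

Lemma quad_valid t : 0 < t < 19/5 -> valid_cycle V0 delta0 quad t.
Proof.
move=> t_in; have t_ge0 : 0 <= t by case/andP: t_in => ? _; lra.
have [D1 D2 D3 D0 [L1 L2 L3 L0]] := quad_edges t_in.
have [opp02 opp13] := quad_opposite_edges t_in.
split=> //; split.
  by case=> [|[|[|[|j]]]] //= _; rewrite /lab /= !innormal_V0 //= /cross /=; neq0.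
split.
  rewrite wpoly_quad //; apply: simple_quadrilateral => //.
  - by apply: cross_psub_dir D1 D2 L1 L2 _; rewrite !edir_V0 //= /cross /=; neq0.
  - by apply: cross_psub_dir D2 D3 L2 L3 _; rewrite !edir_V0 //= /cross /=; neq0.
  - by apply: cross_psub_dir D3 D0 L3 L0 _; rewrite !edir_V0 //= /cross /=; neq0.
  - by apply: cross_psub_dir D0 D1 L0 L1 _; rewrite !edir_V0 //= /cross /=; neq0.
split; first by rewrite area2_V0; split=> _; [lra | exact: quad_area2_gt0].
case=> [|[|[|[|j]]]] //= _;
  rewrite /wv /lab /= ?isect_V0_01 ?isect_V0_12 ?isect_V0_23 ?isect_V0_30 //.
- by exists ((8 - 2 * t - (4 * t - 5 * lag t) / 3) / 8).
- by exists ((4 - t) / 4).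
- by exists ((76 - 15 * t - 5 * lag t) / 76).
- by exists (((4 * t - 5 * lag t) / 3 - t + 4) / 4).
Qed.

Lemma tri_edges t : 19/5 < t < 81/20 ->
  [/\ psub (Q2 t) (T0 t) = pscale ((243 - 60 * t) / 300) (edir V0 2),
      psub (Q3 t) (Q2 t) = pscale ((81 - 20 * t) / 76) (edir V0 3),
      psub (T0 t) (Q3 t) = pscale ((243 - 60 * t) / 100) (edir V0 0) &
   [/\ 0 < (243 - 60 * t) / 300, 0 < (81 - 20 * t) / 76 & 0 < (243 - 60 * t) / 100]].
Proof.
move=> /andP[t_gt t_lt]; rewrite !edir_V0 //= /psub /pscale /Q2 /Q3 /T0 /= lag_ge1; last lra.
by split; try split; try congr pair; lra.
Qed.

Lemma tri_valid t : 19/5 < t < 81/20 -> valid_cycle V0 delta0 tri t.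
Proof.
move=> t_in; have t_ge0 : 0 <= t by case/andP: t_in => ? _; lra.
have [D1 D2 D0 [L1 L2 L0]] := tri_edges t_in.
split=> //; split.
  by case=> [|[|[|j]]] //= _; rewrite /lab /= !innormal_V0 //= /cross /=; neq0.
split.
  rewrite wpoly_tri //; apply: simple_triangle.
  - by apply: cross_psub_dir D1 D2 L1 L2 _; rewrite !edir_V0 //= /cross /=; neq0.
  - by apply: cross_psub_dir D2 D0 L2 L0 _; rewrite !edir_V0 //= /cross /=; neq0.
  - by apply: cross_psub_dir D0 D1 L0 L1 _; rewrite !edir_V0 //= /cross /=; neq0.
split.
  rewrite area2_V0 wpoly_tri //; split=> _; first lra.
  rewrite /area2 /= !big_ord_recr big_ord0 /= /vtx /= /cross /T0 /Q2 /Q3 /= lag_ge1; last lra.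
  have : 0 < (81/20 - t) * (81/20 - t) by case/andP: t_in => *; apply: mulr_gt0; lra.
  nra.
case=> [|[|[|j]]] //= _; rewrite /wv /lab /= ?isect_V0_02 ?isect_V0_23 ?isect_V0_30 //.
- by exists ((243 - 60 * t) / 300).
- by exists ((81 - 20 * t) / 76).
- by exists ((243 - 60 * t) / 100).
Qed.

Lemma simple_V0 : simple_polygon V0.
Proof.
apply: simple_quadrilateral; rewrite ?/cross ?/psub /=; try neq0.
- by move=> x h1 h2; apply: (seg_separated (w := (-4, -3)) (k := -32) _ _ _ _ h1 h2);
    rewrite /dot /=; lra.
- by move=> x h1 h2; apply: (seg_separated (w := (1, 0)) (k := -2) _ _ _ _ h1 h2);
    rewrite /dot /=; lra.
Qed.

Lemma T0_first_event : T0 (19/5) = Q0 (19/5) /\ T0 (19/5) = Q1 (19/5).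
Proof. by rewrite /T0 /Q0 /Q1 lag_ge1; last lra; split; congr pair; lra. Qed.

Definition ts0 : seq R := [:: 0; 19/5; 81/20].
Definition Cs0 : seq (seq (seq nat)) := [:: [:: quad]; [:: tri]].

Lemma first_event : event V0 delta0 [:: quad] [:: tri] (19/5).
Proof.
split; first by move=> c /[1!inE] /eqP ->; exists quad, 0%N; rewrite mem_head.
have t_ge0 : 0 <= 19/5 :> R by lra.
split.
  move=> e x /frag1P [j [hj <- hx]]; apply/frag1P.
  have [eq0 eq1] := T0_first_event.
  move: hx; rewrite wpoly_tri // /edge_seg /vtx /=.
  case: j hj => [|[|[|j]]] //= _ hx; [exists 1%N | exists 2%N | exists 3%N];
    by rewrite wpoly_quad // /edge_seg /vtx /= -?eq0 -?eq1.
rewrite /total_area2 !big_seq1 wpoly_tri // wpoly_quad //.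
rewrite /area2 /= !big_ord_recr !big_ord0 /= /vtx /= /cross /T0 /Q0 /Q1 /Q2 /Q3 /=.
by rewrite lag_ge1; lra.
Qed.

Lemma propagation_V0 : propagation V0 delta0 ts0 Cs0.
Proof.
do 4!split=> //; first by case=> [|[|k]] //= _; lra.
split=> //; split.
  by case=> [|[|k]] // t _ /= t_in; apply: valid_config1; [exact: quad_valid | exact: tri_valid].
split; first by case=> [|k] // _; exact: first_event.
move=> c /[1!inE] /eqP -> /=; rewrite wpoly_tri; last lra.
rewrite /area2 /= !big_ord_recr !big_ord0 /= /vtx /= /cross /T0 /Q2 /Q3 /= lag_ge1; last lra.
lra.
Qed.

Lemma quad_frag_opposite t a x : 0 < t < 19/5 ->
  frag V0 delta0 [:: quad] a t x -> frag V0 delta0 [:: quad] (a.+2 %% 4)%N t x -> False.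
Proof.
move=> t_in /frag1P [i [hi <- hx]] /frag1P [j [hj opp hy]].
have [opp02 opp13] := quad_opposite_edges t_in.
move: hx hy; rewrite wpoly_quad /edge_seg /vtx /=; last by case/andP: t_in => ? _; lra.
by case: i hi opp => [|[|[|[|i]]]] //= _; case: j hj => [|[|[|[|j]]]] //= _ _ hx hy;
  first [exact: opp02 hx hy | exact: opp02 hy hx | exact: opp13 hx hy | exact: opp13 hy hx].
Qed.

Lemma subseq_rot_quad c r : subseq c (rot r quad) -> (3 <= size c)%N ->
  (exists r', c = rot r' quad) \/
  exists2 j, (j < size c)%N & lab c j.+1 = ((lab c j).+2 %% 4)%N.
Proof.
rewrite (rot_minn r) => /subseqP [m]; rewrite size_rot => size_m ->.
have : (minn r (size quad) <= 4)%N by rewrite geq_minr.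
move: (minn r _) => {}r r_le4.
case: r r_le4 => [|[|[|[|[|r]]]]] // _; case: m size_m => [|b0 [|b1 [|b2 [|b3 [|]]]]] // _;
  case: b0; case: b1; case: b2; case: b3 => //= _;
  first [ left; first [by exists 0%N | by exists 1%N | by exists 2%N | by exists 3%N]
        | right; first [by exists 0%N | by exists 1%N | by exists 2%N] ].
Qed.

Lemma quad_event_step r C t t' : 0 < t < 19/5 ->
  event V0 delta0 [:: rot r quad] C t -> valid_config V0 delta0 C t' ->
  exists r', C = [:: rot r' quad].
Proof.
move=> t_in [C_sub [C_frag C_area]] [C_valid C_disj].
have old_frag e : (frag V0 delta0 C e t `<=` frag V0 delta0 [:: quad] e t)%classic.
  by move=> x /C_frag; rewrite frag_rot.
have C_rot c : c \in C -> exists r', c = rot r' quad.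
  move=> cC; have [c_ge3 _] := C_valid c cC.
  have [_ [r0 [/[1!inE] /eqP -> sub_c]]] := C_sub c cC.
  rewrite rot_rot_add in sub_c; have [//|[j _ opp]] := subseq_rot_quad sub_c c_ge3.
  have c_gt0 : (0 < size c)%N by apply: leq_trans c_ge3.
  case: (quad_frag_opposite t_in (old_frag _ _ (frag_wv_prev V0 delta0 t j cC c_gt0))).
  by rewrite -opp; apply: old_frag; exact: frag_wv_next.
case: C C_sub C_frag C_area C_valid C_disj C_rot old_frag
  => [|c1 [|c2 C]] _ _ C_area _ C_disj C_rot _.
- move: C_area; rewrite /total_area2 big_nil big_seq1 area2_wpoly_rot.
  by have := quad_area2_gt0 t_in; lra.
- by have [r' ->] := C_rot c1 (mem_head _ _); exists r'.
have [r1 ?] := C_rot c1 (mem_head _ _).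
have [r2 ?] : exists r', c2 = rot r' quad by apply: C_rot; rewrite inE mem_head orbT.
subst c1 c2.
have [i1 hi1 eq1] := exists_wv_rot V0 delta0 r1 t' 0 (isT : (0 < size quad)%N).
have [i2 hi2 eq2] := exists_wv_rot V0 delta0 r2 t' 0 (isT : (0 < size quad)%N).
case: (C_disj 0 1 (wv V0 delta0 quad t' 0)) => //=.
  by exists i1; rewrite size_rot -eq1; split=> //; exact: seg_start.
by exists i2; rewrite size_rot -eq2; split=> //; exact: seg_start.
Qed.

Lemma propagation_V0_quad ts Cs k : propagation V0 delta0 ts Cs ->
  (k < size Cs)%N -> nth 0 ts k < 19/5 -> exists r, nth [::] Cs k = [:: rot r quad].
Proof.
move=> prop; have ts_ge0 k' := @propagation_ts_ge0 _ _ _ _ _ k' prop.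
case: prop => _ [_ [_ [ts_lt [Cs0 [Cs_valid [Cs_event _]]]]]].
elim: k => [|k IH] hk ts_k; first by exists 0%N; rewrite Cs0.
have ts_k1 := ts_lt k.+1 hk; have ts_k0 := ts_lt k (ltnW hk).
have [r eq_k] := IH (ltnW hk) (lt_trans ts_k0 ts_k).
have ts_k_ge0 := ts_ge0 k (ltnW (ltnW hk)).
apply: (@quad_event_step r _ (nth 0 ts k.+1) ((nth 0 ts k.+1 + nth 0 ts k.+2) / 2)).
- by apply/andP; split; lra.
- by rewrite -eq_k; apply: Cs_event.
- by apply: Cs_valid => //; apply/andP; split; lra.
Qed.

Lemma propagation_V0_end ts Cs : propagation V0 delta0 ts Cs -> 19/5 <= nth 0 ts (size Cs).
Proof.
move=> prop; rewrite leNgt; apply/negP => end_lt.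
have [_ [Cs_gt0 [_ [ts_lt [_ [_ [_ Cs_end]]]]]]] := prop.
have last_lt : ((size Cs).-1 < size Cs)%N by rewrite prednK.
have ts_last := ts_lt _ last_lt; rewrite prednK // in ts_last.
have [r eq_last] := propagation_V0_quad prop last_lt (lt_trans ts_last end_lt).
have end_gt0 : 0 < nth 0 ts (size Cs).
  by apply: le_lt_trans ts_last; apply: propagation_ts_ge0 prop _; rewrite leq_pred.
have end_in : 0 < nth 0 ts (size Cs) < 19/5 by apply/andP; split.
have := Cs_end (rot r quad); rewrite eq_last mem_head area2_wpoly_rot => /(_ isT).
by have := quad_area2_gt0 end_in; lra.
Qed.

Lemma face_V0_origin ts Cs : propagation V0 delta0 ts Cs -> face V0 delta0 ts Cs 1 (1, 0).
Proof.
case=> _ [Cs_gt0 [ts0 [ts_lt [Cs0 _]]]]; exists 0%N, 0; split=> //; split.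
  by have := ts_lt 0%N Cs_gt0; rewrite ts0 => ?; apply/andP; split; lra.
rewrite Cs0; apply/frag1P; exists 0%N; split=> //.
rewrite wpoly_quad // /edge_seg /vtx /= /Q0 /Q1 lag_le1; last lra.
exists (1/8); split; first by apply/andP; split; lra.
by rewrite /padd /pscale /psub /=; congr pair; lra.
Qed.

Lemma face_V0_high ts Cs : propagation V0 delta0 ts Cs -> face V0 delta0 ts Cs 1 (1, 3).
Proof.
move=> prop; have end_ge := propagation_V0_end prop.
have [_ [_ [ts0 _]]] := prop.
have start : nth 0 ts 0 <= 3 by rewrite ts0; lra.
have stop : 3 < nth 0 ts (size Cs) by lra.
have [k [hk /andP[ts_k ts_k1]]] := @exists_crossing_step _ _ (nth 0 ts) 3 _ start stop.
have [r eq_k] : exists r, nth [::] Cs k = [:: rot r quad] by apply: (propagation_V0_quad prop hk); lra.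
exists k, 3; split=> //; split; first by apply/andP; split; lra.
rewrite eq_k frag_rot; apply/frag1P; exists 0%N; split=> //.
rewrite wpoly_quad; last lra.
rewrite /edge_seg /vtx /= /Q0 /Q1 lag_ge1; last lra.
exists (1/4); split; first by apply/andP; split; lra.
by rewrite /padd /pscale /psub /=; congr pair; lra.
Qed.

Lemma face_V0_gap ts Cs : propagation V0 delta0 ts Cs -> ~ face V0 delta0 ts Cs 1 (1, 1).
Proof.
move=> prop [k [t [hk [/andP[ts_k ts_k1] x_frag]]]].
have [_ [_ [_ [ts_lt [_ [Cs_valid _]]]]]] := prop.
have ts_lt_k := ts_lt k hk.
have k_valid : valid_config V0 delta0 (nth [::] Cs k) ((nth 0 ts k + nth 0 ts k.+1) / 2).
  by apply: Cs_valid => //; apply/andP; split; lra.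
have t_ge0 : 0 <= t by apply: le_trans ts_k; exact: propagation_ts_ge0 prop (ltnW hk).
have := frag_on_wline k_valid x_frag.
rewrite /wline /= off_V0 // innormal_V0 // /dot /= => t_eq1.
have ? : t = 1 by lra.
subst t.
have [r eq_k] : exists r, nth [::] Cs k = [:: rot r quad] by apply: (propagation_V0_quad prop hk); lra.
move: x_frag; rewrite eq_k frag_rot => /frag1P [j [hj lab_j hx]].
move: hj lab_j hx; rewrite wpoly_quad; last lra.
case: j => [|[|[|[|j]]]] //= _ _; rewrite /edge_seg /vtx /= /Q0 /Q1 lag_le1; last lra.
move=> hx; suff : 1 < dot (1, 0) (1, 1 : R) by rewrite /dot /=; lra.
by apply: seg_dot_gt hx; rewrite /dot /=; lra.
Qed.

Theorem lemma7 :
  exists (V : seq (Rdefinitions.R * Rdefinitions.R)) (delta : nat -> Rdefinitions.R) (e : nat),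
    simple_polygon V /\
    (forall i, (i < size V)%N -> 0 <= delta i) /\
    (e < size V)%N /\
    (exists ts Cs, propagation V delta ts Cs) /\
    (forall ts Cs, propagation V delta ts Cs ->
       ~ monotone_wrt (face V delta ts Cs e) (edir V e)).
Proof.
exists V0, delta0, 1%N; split; first exact: simple_V0.
split; first by move=> i _; rewrite /delta0; case: eqP => _; lra.
split=> //; split; first by exists ts0, Cs0; exact: propagation_V0.
move=> ts Cs prop /(_ 8); rewrite edir_V0 //= => conn.
have on_line (y : R) : dot (8, 0) (1, y) = 8 by rewrite /dot /=; lra.
have between : 0 <= (1 : R) <= 3 by apply/andP; split; lra.
have [[z1 z2] [z_face z_line] /= z2_eq1] := connected_snd_between conn
  (conj (face_V0_origin prop) (on_line 0)) (conj (face_V0_high prop) (on_line 3)) between.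
have z1_eq1 : z1 = 1 by move: z_line; rewrite /dot /=; lra.
by apply: (face_V0_gap prop); rewrite -[X in (X, _)]z1_eq1 -z2_eq1.
Qed.
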